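(* Let $n\geq 2$ be an integer and $m=\lfloor n/2\rfloor$. Let $X=(X_{j,r})_{j,r\in\{1,\dots,n\}}$ be a random $n\times n$ matrix with independent real-valued entries, $Q_{j,r}$ the distribution of $X_{j,r}$, $\pi$ a uniformly distributed random permutation of $\{1,\dots,n\}$ independent of $X$, and $S_n=\sum_{j=1}^nX_{j,\pi(j)}$ with distribution $P^{S_n}$. For ordered pairs $(j,k),(r,s)$ of distinct elements of $\{1,\dots,n\}$ let $R(j,k,r,s)=\frac12(Q_{j,r}*Q_{k,s}+Q_{k,r}*Q_{j,s})$. Then for every permutation $\varphi$ of $\{1,\dots,n\}$, $$P^{S_n}=\frac{1}{n!}\sum_{r}\Big(\mathop{\ast}_{\ell=1}^m R\big(\varphi(2\ell-1),\varphi(2\ell),r(2\ell-1),r(2\ell)\big)\Big)*Q_{\varphi(n),r(n)}^{*(n-2m)},$$ where the sum runs over all permutations $r$ of $\{1,\dots,n\}$.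
   Context: $*$ denotes convolution of measures on $\mathbb{R}$; $Q^{*k}$ is the $k$-fold convolution power, with the $0$-fold power equal to the Dirac measure $\delta_0$. *)

From HB Require Import structures.
From mathcomp Require Import all_boot all_order all_algebra all_fingroup.
From mathcomp Require Import all_classical all_reals all_analysis.
Set Implicit Arguments. Unset Strict Implicit. Unset Printing Implicit Defensive.
Import Order.TTheory GRing.Theory Num.Theory.
Local Open Scope classical_set_scope.
Local Open Scope ring_scope.

Section Convolution.
Variable R : realType.
Local Open Scope ereal_scope.

Definition conv (mu nu : set R -> \bar R) : set R -> \bar R :=
  fun A => (mu \x nu) ((fun z : R * R => z.1 + z.2)%R @^-1` A).

Definition bigconv (s : seq (set R -> \bar R)) : set R -> \bar R :=
  foldr conv (@dirac _ R 0%R R) s.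

Definition convpow (Q : set R -> \bar R) (k : nat) : set R -> \bar R :=
  bigconv (nseq k Q).

Definition Rmix n (Q : 'I_n -> 'I_n -> set R -> \bar R) (j k r s : 'I_n)
  : set R -> \bar R :=
  fun A => (2%:R^-1)%:E * (conv (Q j r) (Q k s) A + conv (Q k r) (Q j s) A).

End Convolution.

Lemma pair_fst_lt n (i : 'I_(n./2)) : (i.*2 < n)%N.
Proof.
have := ltn_ord i => hi.
have : (i.*2.+2 <= (n./2).*2)%N by rewrite -doubleS leq_double.
move=> h; apply: leq_trans (ltnW h) _.
by rewrite -{2}(odd_double_half n) leq_addl.
Qed.

Lemma pair_snd_lt n (i : 'I_(n./2)) : (i.*2.+1 < n)%N.
Proof.
have := ltn_ord i => hi.
have : (i.*2.+2 <= (n./2).*2)%N by rewrite -doubleS leq_double.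
move=> h; apply: leq_trans h _.
by rewrite -{2}(odd_double_half n) leq_addl.
Qed.

(* 0-based: the pair (phi(2l-1), phi(2l)), l = 1..m, is (phi (2i), phi(2i+1)), i < m *)
Definition pfst n (i : 'I_(n./2)) : 'I_n := Ordinal (pair_fst_lt i).
Definition psnd n (i : 'I_(n./2)) : 'I_n := Ordinal (pair_snd_lt i).

Section Term.
Variable R : realType.
Local Open Scope ereal_scope.

Definition perm_term n (Q : 'I_n -> 'I_n -> set R -> \bar R)
  (phi r : {perm 'I_n}) : set R -> \bar R :=
  conv
    (bigconv [seq Rmix Q (phi (pfst i)) (phi (psnd i)) (r (pfst i)) (r (psnd i))
             | i <- enum 'I_(n./2)])
    (oapp (fun l : 'I_n => convpow (Q (phi l) (r l)) (n - (n./2).*2))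
          (@dirac _ R 0%R R) (insub n.-1)).
End Term.

From Pilot Require Import Defs.
From HB Require Import structures.
From mathcomp Require Import all_boot all_order all_algebra all_fingroup.
From mathcomp Require Import all_classical all_reals all_analysis.
From mathcomp Require Import lra zify.
Import Order.TTheory GRing.Theory Num.Theory.
Import numFieldNormedType.Exports.
Local Open Scope classical_set_scope.
Local Open Scope ring_scope.
Set Implicit Arguments. Unset Strict Implicit. Unset Printing Implicit Defensive.

(* Conditioning on pi = s, independence turns P(S_n in A) into the average over s
   of the convolutions of the Q_{j,s(j)}.  On the other side, let T_t(r) be the
   summand of the theorem in which only the first t pairs carry the mixture R, the
   other pairs the plain convolution Q_{phi(2l-1),r(2l-1)} * Q_{phi(2l),r(2l)}.
   The mixture of the t-th pair is the average of this convolution for r and for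
   r o tau, tau the transposition of the pair, and r |-> r o tau permutes the
   summation range; hence sum_r T_t(r) does not depend on t.  T_0(r) is the
   convolution of all the Q_{phi(k),r(k)}, and reindexing r by phi gives the left
   side.  The convolution identities used on the way (regrouping of factors,
   commutativity of two factors) are all read off sums of independent X_{j,r}. *)

(* [conv], not the convex combination of convex.v. *)
Local Notation conv := Defs.conv.

Section set_functions.
Context d (T : measurableType d) (R : realType).
Local Open Scope ereal_scope.
Implicit Types m : set T -> \bar R.
Import HBNNSimple.

(* The set functions are only pinned down, and only behave as measures,
   on measurable sets. *)
Definition meq m1 m2 := forall A, measurable A -> m1 A = m2 A.

Lemma meq_refl m : meq m m. Proof. by []. Qed.

Lemma meq_trans m1 m2 m3 : meq m1 m2 -> meq m2 m3 -> meq m1 m3.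
Proof. by move=> m12 m23 A mA; rewrite m12 // m23. Qed.

Lemma meq_integral m1 m2 (f : T -> \bar R) :
  meq m1 m2 -> \int[m1]_x f x = \int[m2]_x f x.
Proof.
move=> m12; rewrite /integral.
have E g :
    [set sintegral m1 h | h in [set h : {nnsfun T >-> R} | forall x, (h x)%:E <= g x]]
  = [set sintegral m2 h | h in [set h : {nnsfun T >-> R} | forall x, (h x)%:E <= g x]].
  by apply/seteqP; split=> _ [h hg <-]; exists h => //; apply: eq_fsbigr => r _;
    rewrite m12.
by rewrite !E.
Qed.

Lemma measure_fibers (mu : {measure set T -> \bar R}) (I : finType) (f : T -> I)
    (E : set T) :
  (forall i, measurable ([set x | f x = i] `&` E)) ->
  mu E = \sum_(i : I) mu ([set x | f x = i] `&` E).
Proof.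
move=> mF; rewrite big_enum_val /= -measure_bigsetU_ord //; last first.
  apply/trivIsetP => i j _ _ ij; apply/seteqP; split => // x [[/= fi _] [fj _]].
  by move: ij; rewrite -(inj_eq enum_val_inj) -fi -fj eqxx.
congr (mu _); rewrite -bigcup_seq; apply/seteqP; split => [x Ex|x [i _ []] //].
have fxT : f x \in xpredT by [].
exists (enum_rank_in fxT (f x)); first exact: mem_index_enum.
by split => //=; rewrite enum_rankK_in.
Qed.

End set_functions.

(** * Convolutions and mixtures of laws on R *)

Section convolution.
Variable R : realType.
Local Open Scope ereal_scope.
Implicit Types (f g h : set R -> \bar R) (p q : probability R R).

Definition is_prob f := exists p, meq f p.

Definition mix f g : set R -> \bar R := fun A => (2%:R^-1)%:E * (f A + g A).

Lemma RmixE n (Q : 'I_n -> 'I_n -> set R -> \bar R) j k r s :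
  Rmix Q j k r s = mix (conv (Q j r) (Q k s)) (conv (Q k r) (Q j s)).
Proof. by []. Qed.

Definition add_pair (z : R * R) : R := (z.1 + z.2)%R.

Lemma measurable_add_pair : measurable_fun setT add_pair.
Proof. exact: measurable_realfun.measurable_funD measurable_fst measurable_snd. Qed.

HB.instance Definition _ :=
  isMeasurableFun.Build _ _ _ _ add_pair measurable_add_pair.

Lemma convE f g A : conv f g A = \int[f]_x g (xsection (add_pair @^-1` A) x).
Proof. by []. Qed.

Lemma bigconv_cons f s : bigconv (f :: s) = conv f (bigconv s).
Proof. by []. Qed.

Lemma meq_conv f1 f2 g1 g2 :
  meq f1 f2 -> meq g1 g2 -> meq (conv f1 g1) (conv f2 g2).
Proof.
move=> f12 g12 A mA; rewrite !convE (meq_integral _ f12).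
congr (integral _ _ _); apply/funext => x; apply: g12; apply: measurable_xsection.
exact: measurable_funPTI.
Qed.

Lemma meq_mix f1 f2 g1 g2 :
  meq f1 f2 -> meq g1 g2 -> meq (mix f1 g1) (mix f2 g2).
Proof. by move=> f12 g12 A mA; rewrite /mix f12 // g12. Qed.

Lemma is_prob_probability p : is_prob p.
Proof. by exists p. Qed.

Lemma is_prob_ge0 f A : is_prob f -> measurable A -> 0 <= f A.
Proof. by move=> [p fp] mA; rewrite fp. Qed.

Lemma is_prob_conv f g : is_prob f -> is_prob g -> is_prob (conv f g).
Proof.
move=> [p fp] [q gq]; exists (distribution (p \x q) add_pair).
exact: meq_conv fp gq.
Qed.

Lemma mixxx f A : mix f f A = f A.
Proof.
rewrite /mix; case: (f A) => [x| |] /=.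
- by rewrite -EFinD -EFinM; congr EFin; lra.
- by rewrite addye // muleC gt0_mulye // lte_fin invr_gt0 ltr0n.
- by rewrite addNye muleC gt0_mulNye // lte_fin invr_gt0 ltr0n.
Qed.

Section half_mixture.
Variables p q : probability R R.

Definition mixp := mscale ((2%:R^-1 : R)%:nng : {nonneg R})%R (measure_add p q).

HB.instance Definition _ := Measure.on mixp.

Lemma mixpE A : mixp A = mix p q A.
Proof.
transitivity ((2%:R^-1)%:E * measure_add p q A); first by [].
by rewrite measure_addE.
Qed.

Let mixp_setT : mixp setT = 1.
Proof.
rewrite mixpE /mix !probability_setT -EFinD -EFinM.
by congr (_%:E); rewrite mulVf.
Qed.

HB.instance Definition _ := Measure_isProbability.Build _ _ _ mixp mixp_setT.

Lemma meq_mixp : meq (mix p q) mixp.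
Proof. by move=> A _; rewrite mixpE. Qed.

End half_mixture.

Lemma is_prob_mix f g : is_prob f -> is_prob g -> is_prob (mix f g).
Proof.
move=> [p fp] [q gq]; exists (mixp p q).
exact: meq_trans (meq_mix fp gq) (meq_mixp p q).
Qed.

Lemma conv_mixr f g h : is_prob f -> is_prob g -> is_prob h ->
  meq (conv f (mix g h)) (mix (conv f g) (conv f h)).
Proof.
move=> [p fp] [q gq] [r hr] A mA.
rewrite (meq_conv fp (meq_trans (meq_mix gq hr) (meq_mixp q r))) //.
rewrite /mix (meq_conv fp gq) // (meq_conv fp hr) // !convE.
have mq := measurable_fun_xsection q (measurable_funPTI add_pair mA).
have mr := measurable_fun_xsection r (measurable_funPTI add_pair mA).
under eq_integral => x _ do rewrite mixpE.
rewrite ge0_integralZl //; first by rewrite ge0_integralD.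
- exact: emeasurable_funD.
- by move=> x _; rewrite adde_ge0.
Qed.

Lemma conv_mixl f g h : is_prob f -> is_prob g -> is_prob h ->
  meq (conv (mix f g) h) (mix (conv f h) (conv g h)).
Proof.
move=> [p fp] [q gq] [r hr] A mA.
rewrite (meq_conv (meq_trans (meq_mix fp gq) (meq_mixp p q)) hr) //.
rewrite /mix (meq_conv fp hr) // (meq_conv gq hr) // !convE.
have mr := measurable_fun_xsection r (measurable_funPTI add_pair mA).
by rewrite ge0_integral_mscale // ge0_integral_measure_add.
Qed.

Lemma meq_bigconv (I : eqType) (s : seq I) (F G : I -> set R -> \bar R) :
  (forall i, i \in s -> meq (F i) (G i)) ->
  meq (bigconv (map F s)) (bigconv (map G s)).
Proof.
elim: s => [//|i s IH] FG; rewrite !map_cons !bigconv_cons.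
by apply: meq_conv; [apply: FG; rewrite mem_head|
  apply: IH => j js; apply: FG; rewrite inE js orbT].
Qed.

Lemma is_prob_bigconv (I : eqType) (s : seq I) (F : I -> set R -> \bar R) :
  (forall i, i \in s -> is_prob (F i)) -> is_prob (bigconv (map F s)).
Proof.
elim: s => [|i s IH] PF; first by exists (@dirac _ R 0%R R).
rewrite map_cons bigconv_cons; apply: is_prob_conv.
  by apply: PF; rewrite mem_head.
by apply: IH => j js; apply: PF; rewrite inE js orbT.
Qed.

Lemma bigconv_mix (I : eqType) (s : seq I) (t : I) (F G H : I -> set R -> \bar R) :
  uniq s -> t \in s -> (forall i, is_prob (G i)) -> (forall i, is_prob (H i)) ->
  meq (F t) (mix (G t) (H t)) ->
  (forall i, i != t -> F i = G i /\ F i = H i) ->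
  meq (bigconv (map F s)) (mix (bigconv (map G s)) (bigconv (map H s))).
Proof.
move=> + + PG PH Ft FGH; elim: s => [//|i s IH] /andP[iNs us].
have PGs : is_prob (bigconv (map G s)) by apply: is_prob_bigconv.
have PHs : is_prob (bigconv (map H s)) by apply: is_prob_bigconv.
rewrite !map_cons !bigconv_cons inE => /predU1P[ti|ts].
  have [FGs FHs] : map F s = map G s /\ map F s = map H s.
    by split; apply/eq_in_map => j js; have /FGH[] : j != t by
      apply: contraNneq iNs => jt; rewrite -ti -jt.
  rewrite -ti -FGs -FHs.
  apply: meq_trans (meq_conv Ft (meq_refl _)) _.
  by apply: conv_mixl; rewrite // FGs.
have it : i != t by apply: contraNneq iNs => ->.
have [FGi FHi] := FGH i it.
apply: meq_trans (meq_conv (meq_refl _) (IH us ts)) _.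
by rewrite -FGi -FHi; apply: conv_mixr; rewrite // FGi.
Qed.

End convolution.
Arguments add_pair {R}.

(** * The law of a sum when the joint law is a product *)

Section law_of_sum.
Context d (T : measurableType d) (R : realType) (P : probability T R).
Local Open Scope ereal_scope.
Variables (H : set T) (U V : T -> R).
Hypotheses (mH : measurable H) (mU : measurable_fun setT U)
  (mV : measurable_fun setT V).

Definition trace_law (D : set (R * R)) := P (H `&` (fun w => (U w, V w)) @^-1` D).

Let measurable_trace_preimage D : measurable D ->
  measurable (H `&` (fun w => (U w, V w)) @^-1` D).
Proof.
move=> mD; apply: measurableI mH _; rewrite -[_ @^-1` _]setTI.
exact: (measurable_fun_pair mU mV).
Qed.

Let trace_law0 : trace_law set0 = 0.
Proof. by rewrite /trace_law preimage_set0 setI0 measure0. Qed.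

Let trace_law_ge0 D : 0 <= trace_law D.
Proof. exact: measure_ge0. Qed.

Let trace_law_sigma_additive : semi_sigma_additive trace_law.
Proof.
move=> F mF tF mUF; rewrite /trace_law preimage_bigcup setI_bigcupr.
apply: measure_semi_sigma_additive.
- by move=> i; exact: measurable_trace_preimage.
- apply/trivIsetP => i j _ _ ij; rewrite setIACA setIid -preimage_setI.
  by move/trivIsetP : tF => /(_ i j I I ij) ->; rewrite preimage_set0 setI0.
- by rewrite -setI_bigcupr -preimage_bigcup; exact: measurable_trace_preimage.
Qed.

HB.instance Definition _ := isMeasure.Build _ _ _ trace_law
  trace_law0 trace_law_ge0 trace_law_sigma_additive.

Lemma prob_preimage_add (p q : probability R R) :
  (forall E1 E2, measurable E1 -> measurable E2 ->
     P (H `&` U @^-1` E1 `&` V @^-1` E2) = P H * p E1 * q E2) ->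
  forall C, measurable C ->
  P (H `&` (fun w => U w + V w)%R @^-1` C) = P H * conv p q C.
Proof.
move=> rect C mC.
have [PH0|PH0] := eqVneq (P H) 0.
  rewrite PH0 mul0e; apply/eqP; rewrite eq_le measure_ge0 andbT -PH0.
  apply: measureIl => //; rewrite -[_ @^-1` _]setTI.
  exact: measurable_realfun.measurable_funD.
have PHfin : P H \is a fin_num by rewrite fin_num_measure.
have PH_gt0 : (0 < fine (P H))%R.
  rewrite fine_gt0 // lt0e PH0 measure_ge0 /=.
  by rewrite (le_lt_trans (probability_le1 P mH)) ?ltey.
pose k := (fine (P H))^-1%R.
have k_ge0 : (0 <= k)%R by rewrite invr_ge0 ltW.
have prodE D : measurable D -> (p \x q) D = k%:E * trace_law D.
  apply: (product_measure_unique (m' := mscale (NngNum k_ge0) trace_law)).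
  move=> E1 E2 mE1 mE2.
  transitivity (k%:E * P (H `&` U @^-1` E1 `&` V @^-1` E2)).
    by rewrite -setIA.
  by rewrite rect // -{1}(fineK PHfin) !muleA -EFinM mulVf ?gt_eqF // mul1e.
rewrite /Defs.conv (prodE _ (measurable_funPTI add_pair mC)).
by rewrite muleA -{1}(fineK PHfin) -EFinM mulfV ?gt_eqF // mul1e.
Qed.

End law_of_sum.

Lemma flatten_pairs_iota a k :
  flatten [seq [:: i.*2; i.*2.+1] | i <- iota a k] = iota a.*2 k.*2.
Proof. by elim: k a => [//|k IH] a /=; rewrite IH doubleS. Qed.

Section pairing.
Variable n : nat.
Local Notation m := n./2.

Lemma pfst_neq_psnd (i j : 'I_m) : pfst i != psnd j :> 'I_n.
Proof. by apply/eqP => /(congr1 (odd \o val)); rewrite /= !odd_double. Qed.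

Lemma pfst_inj : injective (@pfst n).
Proof. by move=> i j /(congr1 val) /double_inj /val_inj. Qed.

Lemma psnd_inj : injective (@psnd n).
Proof. by move=> i j /(congr1 val) [] /double_inj /val_inj. Qed.

Definition pair_swap (t : 'I_m) : {perm 'I_n} := tperm (pfst t) (psnd t).

Lemma pair_swap_fix (t i : 'I_m) : i != t ->
  pair_swap t (pfst i) = pfst i /\ pair_swap t (psnd i) = psnd i.
Proof.
move=> it; split; apply: tpermD.
- by rewrite (inj_eq pfst_inj) eq_sym.
- by rewrite eq_sym pfst_neq_psnd.
- by rewrite pfst_neq_psnd.
- by rewrite (inj_eq psnd_inj) eq_sym.
Qed.

Hypothesis n_gt0 : (0 < n)%N.

Let last_idx_lt : (n.-1 < n)%N. Proof. by rewrite ltn_predL. Qed.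

Definition last_idx : 'I_n := Ordinal last_idx_lt.

Definition odd_tail : seq 'I_n := if odd n then [:: last_idx] else [::].

Lemma pair_swap_odd_tail (t : 'I_m) l : l \in odd_tail -> pair_swap t l = l.
Proof.
rewrite /odd_tail; case: ifP => // odd_n; rewrite mem_seq1 => /eqP ->.
have n_eq := odd_double_half n; rewrite odd_n in n_eq.
have t_lt := ltn_ord t.
by apply: tpermD; apply/eqP => /(congr1 val) /=; move: n_eq t_lt; rewrite -!muln2; lia.
Qed.

Lemma enum_pairs :
  flatten [seq [:: pfst i; psnd i] | i <- enum 'I_m] ++ odd_tail = enum 'I_n.
Proof.
apply: (inj_map val_inj); rewrite map_cat val_enum_ord.
have -> : map val (flatten [seq [:: pfst i; psnd i] | i <- enum 'I_m])
          = flatten [seq [:: i.*2; i.*2.+1] | i <- iota 0 m].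
  by rewrite -val_enum_ord; elim: (enum 'I_m) => //= i s ->.
rewrite flatten_pairs_iota.
have := odd_double_half n; rewrite /odd_tail; case: (odd n) => /= n_eq.
  have -> : n.-1 = m.*2 by rewrite -{1}n_eq.
  by rewrite -[in RHS]n_eq add1n -addn1 iotaD.
by rewrite cats0 -[in RHS]n_eq.
Qed.

End pairing.

(** * Sums of independent entries over disjoint blocks *)

Lemma in_bigsetI_ord (T : Type) m (F : 'I_m -> set T) x :
  (\big[setI/setT]_(j < m) F j) x <-> (forall j, F j x).
Proof.
rewrite -bigcap_seq; split => [Fx j|Fx j _]; last exact: Fx.
by apply: Fx; rewrite /= mem_index_enum.
Qed.

Section random_assignment.
Variables (R : realType) (n : nat) (d : measure_display) (Omega : measurableType d)
  (P : probability Omega R) (X : 'I_n -> 'I_n -> {RV P >-> R})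
  (pi : Omega -> {perm 'I_n}).
Hypothesis pi_meas : forall s : {perm 'I_n}, measurable [set w | pi w = s].
Hypothesis indep : forall (A : {set {perm 'I_n}}) (B : 'I_n -> 'I_n -> set R),
  (forall j r, measurable (B j r)) ->
  P ([set w | pi w \in A] `&`
     \big[setI/setT]_(j < n) \big[setI/setT]_(r < n) (X j r @^-1` B j r))
  = (P [set w | pi w \in A] *
     \prod_(j < n) \prod_(r < n) P (X j r @^-1` B j r))%E.
Local Open Scope ereal_scope.

Local Notation entry := ('I_n * 'I_n)%type.
Implicit Types (A : {set {perm 'I_n}}) (B : 'I_n -> 'I_n -> set R).

Definition law (e : entry) := distribution P (X e.1 e.2).

Definition block_sum (b : seq entry) (w : Omega) : R := (\sum_(e <- b) X e.1 e.2 w)%R.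

Lemma measurable_block_sum b : measurable_fun setT (block_sum b).
Proof. by apply: measurable_sum => e; exact: measurable_funPT. Qed.

Lemma measurable_block_sum_preimage b C :
  measurable C -> measurable (block_sum b @^-1` C).
Proof. by move=> mC; rewrite -[_ @^-1` _]setTI; exact: measurable_block_sum. Qed.

Definition cylinder A B : set Omega :=
  [set w | pi w \in A] `&`
  \big[setI/setT]_(j < n) \big[setI/setT]_(r < n) (X j r @^-1` B j r).

Lemma measurable_pi_in A : measurable [set w | pi w \in A].
Proof.
rewrite (_ : [set w | _] = \big[setU/set0]_(s in A) [set w | pi w = s]).
  by apply: bigsetU_measurable => s _; exact: pi_meas.
rewrite -bigcup_seq_cond; apply/seteqP; split => [w piA|w [s /andP[_ sA] /= ->] //].
by exists (pi w) => //=; rewrite mem_index_enum.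
Qed.

Lemma measurable_cylinder A B :
  (forall j r, measurable (B j r)) -> measurable (cylinder A B).
Proof.
move=> mB; apply: measurableI; first exact: measurable_pi_in.
apply: bigsetI_measurable => j _; apply: bigsetI_measurable => r _.
exact: measurable_funPTI.
Qed.

Lemma cylinder_setT A : cylinder A (fun _ _ => setT) = [set w | pi w \in A].
Proof.
apply/seteqP; split=> [w []//|w piA]; split => //.
by apply/in_bigsetI_ord => j; apply/in_bigsetI_ord.
Qed.

Definition upd_entry B (e : entry) (E : set R) :=
  fun j r => if (j, r) == e then E else B j r.

Lemma cylinder_upd A B e E : B e.1 e.2 = setT ->
  cylinder A (upd_entry B e E) = cylinder A B `&` X e.1 e.2 @^-1` E.
Proof.
move=> Be; apply/seteqP; split => w /=.
- move=> [piA /in_bigsetI_ord XB]; split; last first.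
    have /in_bigsetI_ord := XB e.1 => /(_ e.2).
    by rewrite /upd_entry -surjective_pairing eqxx.
  split => //; apply/in_bigsetI_ord => j; apply/in_bigsetI_ord => r.
  have /in_bigsetI_ord := XB j => /(_ r); rewrite /upd_entry.
  by case: eqP => [jre _|//]; move: Be; rewrite -jre => ->.
- move=> [[piA /in_bigsetI_ord XB] XE]; split => //.
  apply/in_bigsetI_ord => j; apply/in_bigsetI_ord => r; rewrite /upd_entry.
  case: eqP => [jre|_]; first by move: XE; rewrite -jre.
  by have /in_bigsetI_ord := XB j.
Qed.

Lemma prob_cylinder_upd A B e E :
  (forall j r, measurable (B j r)) -> measurable E -> B e.1 e.2 = setT ->
  P (cylinder A (upd_entry B e E)) = P (cylinder A B) * law e E.
Proof.
move=> mB mE Be.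
have mB' j r : measurable (upd_entry B e E j r) by rewrite /upd_entry; case: eqP.
rewrite /cylinder !indep // -muleA; congr (_ * _).
rewrite !pair_big /= (bigD1 e) //= (bigD1 e (P := xpredT)) //=.
rewrite /upd_entry /= -surjective_pairing eqxx Be preimage_setT probability_setT.
rewrite mul1e muleC; congr (_ * _); apply: eq_bigr => i ie.
by rewrite -surjective_pairing (negbTE ie).
Qed.

Definition block_event (L : seq (seq entry * set R)) : set Omega :=
  \big[setI/setT]_(bC <- L) (block_sum bC.1 @^-1` bC.2).

Definition block_prob (L : seq (seq entry * set R)) : \bar R :=
  \prod_(bC <- L) bigconv (map law bC.1) bC.2.

Lemma block_sum_nil : block_sum [::] = fun=> 0%R.
Proof. by apply/funext => w; rewrite /block_sum big_nil. Qed.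

Lemma block_sum_cons e b :
  block_sum (e :: b) = (fun w => X e.1 e.2 w + block_sum b w)%R.
Proof. by apply/funext => w; rewrite /block_sum big_cons. Qed.

Lemma block_event_cons bC L :
  block_event (bC :: L) = block_sum bC.1 @^-1` bC.2 `&` block_event L.
Proof. exact: big_cons. Qed.

Lemma block_prob_cons bC L :
  block_prob (bC :: L) = bigconv (map law bC.1) bC.2 * block_prob L.
Proof. exact: big_cons. Qed.

Lemma measurable_block_event L :
  (forall bC, bC \in L -> measurable bC.2) -> measurable (block_event L).
Proof.
move=> mL; rewrite /block_event big_seq; apply: bigsetI_measurable => bC bCL.
by apply: measurable_block_sum_preimage; exact: mL.
Qed.

Lemma is_prob_law_bigconv b : is_prob (bigconv (map law b)).
Proof. by apply: is_prob_bigconv => e _; exact: is_prob_probability. Qed.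

Lemma prob_block_event_nil (G : set Omega) C L :
  P (G `&` block_event (([::], C) :: L)) = P (G `&` block_event L) * bigconv [::] C.
Proof.
rewrite block_event_cons block_sum_nil /= diracE preimage_cst.
by case: (0%R \in C); rewrite ?setTI ?mule1 // set0I setI0 measure0 mule0.
Qed.

Lemma prob_cylinder_block_event_cons A B e b C L :
  (forall j r, measurable (B j r)) -> B e.1 e.2 = setT -> measurable C ->
  (forall bC, bC \in L -> measurable bC.2) ->
  P (cylinder A B `&` block_event L) = P (cylinder A B) * block_prob L ->
  (forall E1 E2, measurable E1 -> measurable E2 ->
     P (cylinder A (upd_entry B e E1) `&` block_event ((b, E2) :: L))
     = P (cylinder A (upd_entry B e E1)) * block_prob ((b, E2) :: L)) ->
  P (cylinder A B `&` block_event ((e :: b, C) :: L))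
  = P (cylinder A B) * block_prob ((e :: b, C) :: L).
Proof.
move=> mB Be mC mL PH IH; have [p bp] := is_prob_law_bigconv b.
have mH : measurable (cylinder A B `&` block_event L).
  by apply: measurableI; [exact: measurable_cylinder|exact: measurable_block_event].
have rect E1 E2 : measurable E1 -> measurable E2 ->
    P (cylinder A B `&` block_event L `&` X e.1 e.2 @^-1` E1 `&` block_sum b @^-1` E2)
    = P (cylinder A B `&` block_event L) * law e E1 * p E2.
  move=> mE1 mE2; transitivity (P (cylinder A (upd_entry B e E1) `&`
                                   block_event ((b, E2) :: L))).
    rewrite cylinder_upd // block_event_cons.
    by congr (P _); apply/seteqP; split => w /=; tauto.
  have mB' j r : measurable (upd_entry B e E1 j r) by rewrite /upd_entry; case: eqP.
  rewrite IH // prob_cylinder_upd // block_prob_cons PH -bp //= -!muleA.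
  by congr (_ * _); rewrite [RHS]muleC -muleA.
have mX := measurable_funPT (X e.1 e.2).
rewrite block_event_cons block_prob_cons block_sum_cons /= [_ `&` block_event L]setIC.
rewrite setIA (prob_preimage_add mH mX (measurable_block_sum b) rect) //.
by rewrite PH (meq_conv (meq_refl _) bp) // muleAC -muleA.
Qed.

Lemma prob_cylinder_block_event L A B :
  uniq (flatten (unzip1 L)) -> (forall bC, bC \in L -> measurable bC.2) ->
  (forall j r, measurable (B j r)) ->
  (forall e, e \in flatten (unzip1 L) -> B e.1 e.2 = setT) ->
  P (cylinder A B `&` block_event L) = P (cylinder A B) * block_prob L.
Proof.
(* Induction on entries plus blocks: an entry of the first block is moved into
   the cylinder, or an empty first block is dropped. *)
have [N] := ubnP (size (flatten (unzip1 L)) + size L).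
elim: N L A B => // N IH [|[b C] L] A B sizeL uL mL mB Bset.
  by rewrite /block_event /block_prob !big_nil setIT mule1.
have mC : measurable C := mL (b, C) (mem_head _ _).
have {}mL bC : bC \in L -> measurable bC.2.
  by move=> bCL; apply: mL; rewrite inE bCL orbT.
have IHL : P (cylinder A B `&` block_event L) = P (cylinder A B) * block_prob L.
  apply: IH => //.
  - by move: sizeL; rewrite /= size_cat; lia.
  - by move: uL; rewrite /= cat_uniq => /and3P[].
  - by move=> e eL; apply: Bset; rewrite /= mem_cat eL orbT.
case: b sizeL uL Bset => [|e b] sizeL uL Bset.
  by rewrite prob_block_event_nil block_prob_cons IHL muleAC muleA.
move: uL => /= /andP[eNbL ubL].
apply: prob_cylinder_block_event_cons => // [|E1 E2 mE1 mE2].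
  by apply: Bset; rewrite mem_head.
apply: IH => //.
- by move=> bC; rewrite inE => /predU1P[->//|]; exact: mL.
- by move=> j r; rewrite /upd_entry; case: eqP.
- move=> f fbL; rewrite /upd_entry -surjective_pairing ifN; last first.
    by apply: contraNneq eNbL => <-.
  by apply: Bset; rewrite inE fbL orbT.
Qed.

Lemma prob_pi_block_event A L :
  uniq (flatten (unzip1 L)) -> (forall bC, bC \in L -> measurable bC.2) ->
  P ([set w | pi w \in A] `&` block_event L) = P [set w | pi w \in A] * block_prob L.
Proof.
move=> uL mL; rewrite -(cylinder_setT A).
exact: prob_cylinder_block_event.
Qed.

Lemma pi_in_setT : [set w | pi w \in [set: {perm 'I_n}]%SET] = setT.
Proof. by apply/seteqP; split => // w _; rewrite /= inE. Qed.

Lemma prob_block_event L :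
  uniq (flatten (unzip1 L)) -> (forall bC, bC \in L -> measurable bC.2) ->
  P (block_event L) = block_prob L.
Proof.
move=> uL mL; have := prob_pi_block_event [set: {perm 'I_n}]%SET uL mL.
by rewrite pi_in_setT setTI probability_setT mul1e.
Qed.

Lemma prob_pi_block_sum A b C : uniq b -> measurable C ->
  P ([set w | pi w \in A] `&` block_sum b @^-1` C)
  = P [set w | pi w \in A] * bigconv (map law b) C.
Proof.
move=> ub mC; have := prob_pi_block_event A (L := [:: (b, C)]).
rewrite /block_event /block_prob !big_seq1 => -> //=; first by rewrite cats0.
by move=> bC; rewrite mem_seq1 => /eqP ->.
Qed.

Lemma prob_block_sum b C : uniq b -> measurable C ->
  P (block_sum b @^-1` C) = bigconv (map law b) C.
Proof.
move=> ub mC; have := prob_pi_block_sum [set: {perm 'I_n}]%SET ub mC.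
by rewrite pi_in_setT setTI probability_setT mul1e.
Qed.

Lemma meq_law_bigconv1 e : meq (law e) (bigconv [:: law e]).
Proof.
move=> C mC; rewrite -[[:: law e]]/(map law [:: e]) -prob_block_sum //.
by congr (P (_ @^-1` C)); apply/funext => w; rewrite /block_sum big_seq1.
Qed.

Lemma bigconv_law_cat b1 b2 : uniq (b1 ++ b2) ->
  meq (conv (bigconv (map law b1)) (bigconv (map law b2)))
      (bigconv (map law (b1 ++ b2))).
Proof.
move=> ub12 C mC.
have [p1 bp1] := is_prob_law_bigconv b1; have [p2 bp2] := is_prob_law_bigconv b2.
have rect E1 E2 : measurable E1 -> measurable E2 ->
    P (setT `&` block_sum b1 @^-1` E1 `&` block_sum b2 @^-1` E2)
    = P setT * p1 E1 * p2 E2.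
  move=> mE1 mE2; rewrite probability_setT mul1e -bp1 // -bp2 // setTI.
  have := prob_block_event (L := [:: (b1, E1); (b2, E2)]).
  rewrite /block_event /block_prob !big_cons !big_nil setIT mule1 => -> //=.
  - by rewrite cats0.
  - by move=> bC; rewrite !inE => /orP[] /eqP ->.
rewrite (meq_conv bp1 bp2) // -prob_block_sum // -[X in P X]setTI.
rewrite (_ : block_sum (b1 ++ b2) = (fun w => block_sum b1 w + block_sum b2 w)%R);
  last by apply/funext => w; rewrite /block_sum big_cat.
rewrite (prob_preimage_add measurableT (measurable_block_sum b1)
  (measurable_block_sum b2) rect) //.
by rewrite probability_setT mul1e.
Qed.

Lemma bigconv_law_flatten (I : eqType) (s : seq I) (blk : I -> seq entry) :
  uniq (flatten (map blk s)) ->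
  meq (bigconv (map (fun i => bigconv (map law (blk i))) s))
      (bigconv (map law (flatten (map blk s)))).
Proof.
elim: s => [_|i s IH /= ub]; first exact: meq_refl.
have ubs : uniq (flatten (map blk s)) by move: ub; rewrite cat_uniq => /and3P[].
rewrite map_cat; apply: meq_trans (meq_conv (meq_refl _) (IH ubs)) _.
by rewrite -map_cat; exact: bigconv_law_cat.
Qed.

Lemma meq_conv_law_pair e1 e2 : e1 != e2 ->
  meq (conv (law e1) (law e2)) (bigconv (map law [:: e1; e2])).
Proof.
move=> e12; apply: meq_trans (meq_conv (meq_law_bigconv1 e1) (meq_law_bigconv1 e2)) _.
by apply: (bigconv_law_cat (b1 := [:: e1]) (b2 := [:: e2])); rewrite /= inE e12.
Qed.

(* Commutativity is read off the realisation by independent variables. *)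
Lemma conv_lawC e1 e2 : e1 != e2 ->
  meq (conv (law e1) (law e2)) (conv (law e2) (law e1)).
Proof.
move=> e12 C mC; have e21 : e2 != e1 by rewrite eq_sym.
rewrite meq_conv_law_pair // meq_conv_law_pair // -!prob_block_sum /= ?inE ?andbT //.
by congr (P (_ @^-1` C)); apply/funext => w; rewrite /block_sum !big_cons addrCA.
Qed.

Definition perm_entries (s : {perm 'I_n}) : seq entry :=
  [seq (j, s j) | j <- enum 'I_n].

Lemma uniq_perm_entries s : uniq (perm_entries s).
Proof. by rewrite map_inj_uniq ?enum_uniq // => j k []. Qed.

Lemma prob_perm_sum (C : set R) :
  measurable C -> (forall s, P [set w | pi w = s] = ((n`!)%:R^-1)%:E) ->
  P ((fun w => \sum_(j < n) X j (pi w j) w)%R @^-1` C)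
  = ((n`!)%:R^-1)%:E * \sum_(s : {perm 'I_n}) bigconv (map law (perm_entries s)) C.
Proof.
move=> mC pi_unif.
have sumE s w : block_sum (perm_entries s) w = (\sum_(j < n) X j (s j) w)%R.
  by rewrite /block_sum big_map big_enum.
have fiber s : [set w | pi w = s] `&` (fun w => \sum_(j < n) X j (pi w j) w)%R @^-1` C
    = [set w | pi w \in [set s]%SET] `&` block_sum (perm_entries s) @^-1` C.
  apply/seteqP; split => w /= [].
    by move=> piw; rewrite inE piw eqxx sumE.
  by rewrite inE sumE => /eqP ->.
rewrite (measure_fibers P (f := pi)) => [|s]; last first.
  rewrite fiber; apply: measurableI; first exact: measurable_pi_in.
  exact: measurable_block_sum_preimage.
rewrite ge0_sume_distrr; last first.
  by move=> s _; apply: is_prob_ge0 => //; exact: is_prob_law_bigconv.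
apply: eq_bigr => s _; rewrite fiber.
apply: eq_trans (prob_pi_block_sum _ (uniq_perm_entries s) mC) _.
rewrite -(pi_unif s); congr (P _ * _).
by apply/seteqP; split => w; rewrite /= inE => /eqP.
Qed.

(** * Symmetrising the pairs one at a time *)

Variable phi : {perm 'I_n}.
Hypothesis n_gt0 : (0 < n)%N.
Local Notation m := n./2.
Local Notation Q := (fun j k => distribution P (X j k)).

Definition pair_entries (r : {perm 'I_n}) (i : 'I_m) : seq entry :=
  [:: (phi (pfst i), r (pfst i)); (phi (psnd i), r (psnd i))].

Definition tail_entries (r : {perm 'I_n}) : seq entry :=
  [seq (phi l, r l) | l <- odd_tail n_gt0].

Definition pair_term (t : nat) (r : {perm 'I_n}) (i : 'I_m) : set R -> \bar R :=
  if (i < t)%N then Rmix Q (phi (pfst i)) (phi (psnd i)) (r (pfst i)) (r (psnd i))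
  else bigconv (map law (pair_entries r i)).

Definition partial_term t r :=
  conv (bigconv [seq pair_term t r i | i <- enum 'I_m])
       (bigconv (map law (tail_entries r))).

Lemma is_prob_pair_term t r i : is_prob (pair_term t r i).
Proof.
rewrite /pair_term; case: ifP => _; last exact: is_prob_law_bigconv.
by rewrite RmixE; apply: is_prob_mix; apply: is_prob_conv; exact: is_prob_probability.
Qed.

Lemma is_prob_pair_terms t r :
  is_prob (bigconv [seq pair_term t r i | i <- enum 'I_m]).
Proof. by apply: is_prob_bigconv => i _; exact: is_prob_pair_term. Qed.

Lemma perm_term_partial r : meq (perm_term Q phi r) (partial_term m r).
Proof.
apply: meq_conv.
  by apply: meq_bigconv => i _; rewrite /pair_term ltn_ord; exact: meq_refl.
rewrite /tail_entries /odd_tail insubT ?ltn_predL // => lt_n /=.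
have -> : Sub n.-1 lt_n = last_idx n_gt0 by apply: val_inj.
have -> : (n - m.*2)%N = odd n by rewrite -{1}(odd_double_half n) addnK.
by case: (odd n); exact: meq_refl.
Qed.

Lemma partial_term_step t r (t_lt : (t < m)%N) :
  meq (partial_term t.+1 r)
      (mix (partial_term t r) (partial_term t (pair_swap (Ordinal t_lt) * r))).
Proof.
set t' := Ordinal t_lt; set s := pair_swap t'.
rewrite /partial_term (_ : tail_entries (s * r) = tail_entries r); last first.
  by apply/eq_in_map => l /(pair_swap_odd_tail t') sl; rewrite permM sl.
have Pt := is_prob_pair_terms t r; have Ps := is_prob_pair_terms t (s * r).
apply: meq_trans (meq_conv _ (meq_refl _)) (conv_mixl Pt Ps (is_prob_law_bigconv _)).
apply: (bigconv_mix (enum_uniq _) (mem_enum _ t')) => [i|i||i it].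
- exact: is_prob_pair_term.
- exact: is_prob_pair_term.
- rewrite /pair_term /= ltnSn ltnn RmixE !permM /s /pair_swap tpermL tpermR.
  have ne (k1 k2 : 'I_n) : (phi (pfst t'), k1) != (phi (psnd t'), k2).
    by apply/eqP => -[] /perm_inj/eqP; rewrite (negbTE (pfst_neq_psnd _ _)).
  apply: meq_mix; first exact: meq_conv_law_pair (ne _ _).
  have ne' : (phi (psnd t'), r (pfst t')) != (phi (pfst t'), r (psnd t')).
    by rewrite eq_sym ne.
  exact: meq_trans (conv_lawC ne') (meq_conv_law_pair (ne _ _)).
have [sf ss] := pair_swap_fix it.
have it_lt : (i < t.+1)%N = (i < t)%N.
  by rewrite ltnS leq_eqVlt (_ : val i == t = false) //; exact: negbTE it.
by rewrite /pair_term it_lt /pair_entries !permM sf ss.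
Qed.

Lemma is_prob_partial_term t r : is_prob (partial_term t r).
Proof. exact: is_prob_conv (is_prob_pair_terms _ _) (is_prob_law_bigconv _). Qed.

Lemma sum_partial_term C t : measurable C -> (t <= m)%N ->
  \sum_(r : {perm 'I_n}) partial_term t r C
  = \sum_(r : {perm 'I_n}) partial_term 0 r C.
Proof.
move=> mC; elim: t => [//|t IH] t_lt; rewrite -IH ?(ltnW t_lt) //.
set s := pair_swap (Ordinal t_lt).
transitivity
  (\sum_(r : {perm 'I_n}) mix (partial_term t r) (partial_term t (s * r)) C).
  by apply: eq_bigr => r _; exact: (partial_term_step r t_lt mC).
rewrite /mix -ge0_sume_distrr; last first.
  by move=> r _; rewrite adde_ge0 // is_prob_ge0 //; exact: is_prob_partial_term.
rewrite big_split /=.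
have -> : \sum_(r : {perm 'I_n}) partial_term t (s * r) C
        = \sum_(r : {perm 'I_n}) partial_term t r C.
  by rewrite [RHS](reindex_inj (mulgI s)).
exact: (mixxx (fun C => \sum_(r : {perm 'I_n}) partial_term t r C)).
Qed.

Lemma partial_term0 r :
  meq (partial_term 0 r) (bigconv (map law [seq (phi k, r k) | k <- enum 'I_n])).
Proof.
have u : uniq [seq (phi k, r k) | k <- enum 'I_n].
  by rewrite map_inj_uniq ?enum_uniq // => j k [] /perm_inj.
rewrite -(enum_pairs n_gt0) map_cat map_flatten -map_comp in u *.
apply: meq_trans (bigconv_law_cat u); apply: meq_conv (meq_refl _).
have u1 : uniq (flatten (map (pair_entries r) (enum 'I_m))).
  by move: u; rewrite cat_uniq => /and3P[].
apply: meq_trans (bigconv_law_flatten u1).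
by apply: meq_bigconv => i _; rewrite /pair_term ltn0; exact: meq_refl.
Qed.

Lemma sum_perm_term C : measurable C ->
  \sum_(r : {perm 'I_n}) perm_term Q phi r C
  = \sum_(s : {perm 'I_n}) bigconv (map law (perm_entries s)) C.
Proof.
move=> mC; under eq_bigr => r _ do rewrite (perm_term_partial r mC).
rewrite sum_partial_term // [RHS](reindex_inj (mulgI phi^-1%g)).
apply: eq_bigr => r _; rewrite partial_term0 // -!prob_block_sum //; last 2 first.
- exact: uniq_perm_entries.
- by rewrite map_inj_uniq ?enum_uniq // => j k [] /perm_inj.
congr (P (_ @^-1` C)); apply/funext => w.
rewrite /block_sum !big_map [RHS](reindex_inj (@perm_inj _ phi)) /=.
by apply: eq_bigr => k _; rewrite permM permK.
Qed.

End random_assignment.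

Unset Implicit Arguments.
Theorem mainTheorem6 (R : realType) (n : nat) (hn : (2 <= n)%N)
  (d : measure_display) (Omega : measurableType d) (P : probability Omega R)
  (X : 'I_n -> 'I_n -> {RV P >-> R}) (pi : Omega -> {perm 'I_n})
  (pi_meas : forall s : {perm 'I_n}, measurable [set w | pi w = s])
  (pi_unif : forall s : {perm 'I_n},
      P [set w | pi w = s] = ((n`!)%:R^-1)%:E)
  (indep : forall (A : {set {perm 'I_n}}) (B : 'I_n -> 'I_n -> set R),
      (forall j r, measurable (B j r)) ->
      P ([set w | pi w \in A] `&`
         \big[setI/setT]_(j < n) \big[setI/setT]_(r < n) (X j r @^-1` B j r))
      = (P [set w | pi w \in A] *
         \prod_(j < n) \prod_(r < n) P (X j r @^-1` B j r))%E)
  (phi : {perm 'I_n}) (A : set R) (mA : measurable A) :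
  P ((fun w => \sum_(j < n) X j (pi w j) w) @^-1` A)
  = (((n`!)%:R^-1)%:E *
     \sum_(r : {perm 'I_n})
        perm_term (fun j k => distribution P (X j k)) phi r A)%E.
Proof.
have n_gt0 : (0 < n)%N by apply: leq_trans hn.
rewrite (prob_perm_sum pi_meas indep mA pi_unif).
by rewrite (sum_perm_term pi_meas indep phi n_gt0 mA).
Qed.
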